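(* Let $h:(\mathbb{R}^n,0)\to(\mathbb{R}^n,0)$ be a bi-Lipschitz homeomorphism germ, and let $U,V\subset\mathbb{R}^n$ be set-germs at $0$ with $0\in\overline{U}\cap\overline{V}$. Suppose that $D(U\cap V)=D(U)\cap D(V)$, and that $U\cap V$ and $h(U)$ satisfy condition (SSP). Then $D(h(U\cap V))=D(h(U))\cap D(h(V))$.
   Context: For a set-germ $A\subset\mathbb{R}^n$ at $0$, $D(A)=\{a\in S^{n-1}:\exists\, x_i\in A\setminus\{0\},\ x_i\to0,\ x_i/\|x_i\|\to a\}$ (empty if no such sequences exist). For sequences, $\|u_m\|\ll\|v_m\|,\|w_m\|$ means $\|u_m\|/\|v_m\|\to0$ and $\|u_m\|/\|w_m\|\to0$. A set-germ $A$ satisfies condition (SSP) if for every sequence $a_m\in\mathbb{R}^n$ tending to $0$ with $\lim a_m/\|a_m\|\in D(A)$ there is a sequence $b_m\in A$ with $\|a_m-b_m\|\ll\|a_m\|,\|b_m\|$. A bi-Lipschitz homeomorphism germ is a homeomorphism germ $h$ with $h(0)=0$ and constants $0<K_1\le K_2$ with $K_1\|x-y\|\le\|h(x)-h(y)\|\le K_2\|x-y\|$ near $0$. *)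

From HB Require Import structures.
From mathcomp Require Import all_boot all_order all_algebra.
From mathcomp Require Import all_classical all_reals all_analysis.
Set Implicit Arguments. Unset Strict Implicit. Unset Printing Implicit Defensive.
Import Order.TTheory GRing.Theory Num.Theory.
Local Open Scope classical_set_scope.
Local Open Scope ring_scope.

Section Defs.
Context {R : realType} {n : nat}.
Local Notation vec := 'rV[R]_n.

Definition enorm (x : vec) : R := Num.sqrt (\sum_(i < n) (x ord0 i) ^+ 2).

Definition eball0 (r : R) : set vec := [set x | enorm x < r].

Definition tends0 (u : nat -> R) : Prop := u @ \oo --> (0 : R^o).

Definition seq_to0 (x : nat -> vec) : Prop := tends0 (fun m => enorm (x m)).
Definition dir_to (x : nat -> vec) (a : vec) : Prop :=
  tends0 (fun m => enorm ((enorm (x m))^-1 *: x m - a)).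

Definition Dset (A : set vec) : set vec :=
  [set a | enorm a = 1 /\
     exists x : nat -> vec, (forall m, A (x m) /\ x m <> 0) /\
       seq_to0 x /\ dir_to x a].

Definition negl (u v : nat -> vec) : Prop :=
  forall e : R, 0 < e -> exists N : nat, forall m : nat, (N <= m)%N ->
    enorm (u m) <= e * enorm (v m).

Definition SSP (A : set vec) : Prop :=
  forall a : nat -> vec, seq_to0 a -> (exists d, Dset A d /\ dir_to a d) ->
    exists b : nat -> vec, (forall m, A (b m)) /\
      negl (fun m => a m - b m) a /\ negl (fun m => a m - b m) b.

Definition in_closure0 (A : set vec) : Prop :=
  forall e : R, 0 < e -> exists x, A x /\ enorm x < e.

(* h is a bi-Lipschitz homeomorphism germ (R^n,0) -> (R^n,0), represented
   on the ball of radius r: h 0 = 0, h is bi-Lipschitz with constants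
   0 < K1 <= K2 on that ball (hence injective, continuous with continuous
   inverse there), and its image contains a neighbourhood of 0. *)
Definition bilip_homeo_germ (h : vec -> vec) (r K1 K2 : R) : Prop :=
  0 < r /\ 0 < K1 /\ K1 <= K2 /\ h 0 = 0 /\
      (forall x y, eball0 r x -> eball0 r y ->
         K1 * enorm (x - y) <= enorm (h x - h y) /\
         enorm (h x - h y) <= K2 * enorm (x - y)) /\
      (exists s : R, 0 < s /\ eball0 s `<=` h @` eball0 r).

Definition gimage (h : vec -> vec) (r : R) (A : set vec) : set vec :=
  h @` (A `&` eball0 r).

End Defs.

From HB Require Import structures.
From mathcomp Require Import all_boot all_order all_algebra.
From mathcomp Require Import all_classical all_reals all_analysis.
From mathcomp Require Import ring lra.
Set Implicit Arguments. Unset Strict Implicit. Unset Printing Implicit Defensive.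
Import Order.TTheory GRing.Theory Num.Theory.
Import numFieldNormedType.Exports.
Local Open Scope classical_set_scope.
Local Open Scope ring_scope.

(* Let a be in D(h(U)) and D(h(V)), witnessed by y_m = h(v_m) in h(V).  Since h is
   bi-Lipschitz, |v_m| is comparable to |y_m|, so along a subsequence v_m tends to 0
   in some direction c, and c is in D(V).  (SSP) for h(U) gives h(u_m) in h(U) with
   |h(u_m) - y_m| << |y_m|; pulling back through h, |u_m - v_m| << |v_m|, and
   asymptotically equivalent sequences have the same limit direction, so c is in D(U),
   hence in D(U) /\ D(V) = D(U /\ V).  (SSP) for U /\ V now gives w_m in U /\ V with
   |w_m - v_m| << |v_m|; pushing forward, h(w_m) in h(U /\ V) is asymptotic to y_m and
   so tends to 0 in direction a.  The other inclusion is monotonicity of D. *)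

Section EuclideanNorm.
Context {R : realType} {n : nat}.
Implicit Types x y : 'rV[R]_n.

Lemma enorm_ge0 x : 0 <= enorm x.
Proof. exact: sqrtr_ge0. Qed.

Lemma enorm_sqr x : enorm x ^+ 2 = \sum_(i < n) x ord0 i ^+ 2.
Proof. by rewrite sqr_sqrtr // sumr_ge0 // => i _; exact: sqr_ge0. Qed.

Lemma enorm0 : enorm (0 : 'rV[R]_n) = 0.
Proof. by rewrite /enorm big1 ?sqrtr0 // => i _; rewrite mxE expr0n. Qed.

Lemma ler_coord_enorm x i : `|x ord0 i| <= enorm x.
Proof.
rewrite -sqrtr_sqr; apply: ler_wsqrtr.
by rewrite (bigD1 i) //= lerDl sumr_ge0 // => j _; exact: sqr_ge0.
Qed.

Lemma enorm_eq0 x : enorm x = 0 -> x = 0.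
Proof.
move=> x0; apply/matrixP => a j; rewrite (ord1 a) mxE.
by apply/eqP; rewrite -normr_le0 -x0 ler_coord_enorm.
Qed.

Lemma enorm_gt0 x : x <> 0 -> 0 < enorm x.
Proof. by move=> x0; rewrite lt_def enorm_ge0 andbT; apply/eqP => /enorm_eq0. Qed.

Lemma enormZ (k : R) x : enorm (k *: x) = `|k| * enorm x.
Proof.
rewrite /enorm -sqrtr_sqr -sqrtrM ?sqr_ge0 // mulr_sumr; congr Num.sqrt.
by apply: eq_bigr => i _; rewrite mxE exprMn.
Qed.

Lemma enormN x : enorm (- x) = enorm x.
Proof. by rewrite -scaleN1r enormZ normrN normr1 mul1r. Qed.

Lemma enorm_distC x y : enorm (x - y) = enorm (y - x).
Proof. by rewrite -enormN opprB. Qed.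

Lemma sum_mul_le_enorm x y : \sum_(i < n) x ord0 i * y ord0 i <= enorm x * enorm y.
Proof.
have [->|/eqP/enorm_gt0 a0] := eqVneq x 0.
  by rewrite enorm0 mul0r big1 // => i _; rewrite mxE mul0r.
have [->|/eqP/enorm_gt0 b0] := eqVneq y 0.
  by rewrite enorm0 mulr0 big1 // => i _; rewrite mxE mulr0.
set a := enorm x in a0 *; set b := enorm y in b0 *.
(* Weighted AM-GM in each coordinate; the weights make the bounds sum to [a * b]. *)
have amgm i : x ord0 i * y ord0 i <=
    b / (2 * a) * x ord0 i ^+ 2 + a / (2 * b) * y ord0 i ^+ 2.
  rewrite -subr_ge0.
  have -> : b / (2 * a) * x ord0 i ^+ 2 + a / (2 * b) * y ord0 i ^+ 2
      - x ord0 i * y ord0 i = (b * x ord0 i - a * y ord0 i) ^+ 2 / (2 * a * b).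
    by field; rewrite ?gt_eqF.
  by rewrite divr_ge0 ?sqr_ge0 // !mulr_ge0 // ltW.
apply: le_trans (ler_sum _ (fun i _ => amgm i)) _.
rewrite big_split /= -!mulr_sumr -!enorm_sqr -/a -/b.
by rewrite (_ : _ + _ = a * b) //; field; rewrite ?gt_eqF.
Qed.

Lemma ler_enormD x y : enorm (x + y) <= enorm x + enorm y.
Proof.
rewrite -(ler_pXn2r (_ : (0 < 2)%N)) ?nnegrE ?addr_ge0 ?enorm_ge0 //.
rewrite sqrrD !enorm_sqr.
have -> : \sum_(i < n) (x + y) ord0 i ^+ 2 = \sum_(i < n) x ord0 i ^+ 2
    + \sum_(i < n) (x ord0 i * y ord0 i) *+ 2 + \sum_(i < n) y ord0 i ^+ 2.
  by rewrite -!big_split /=; apply: eq_bigr => i _; rewrite mxE sqrrD.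
by rewrite sumrMnl lerD2r lerD2l lerMn2r sum_mul_le_enorm.
Qed.

Lemma lerB_enorm x y : enorm x - enorm y <= enorm (x - y).
Proof. by rewrite lerBlDr (le_trans _ (ler_enormD _ _)) // subrK. Qed.

Lemma ler_enorm_dist x y : `|enorm x - enorm y| <= enorm (x - y).
Proof.
rewrite ler_norml lerB_enorm andbT lerNl opprB enorm_distC.
exact: lerB_enorm.
Qed.

Lemma enorm_le_sum_abs x : enorm x <= \sum_(i < n) `|x ord0 i|.
Proof.
rewrite -(ler_pXn2r (_ : (0 < 2)%N)) ?nnegrE ?enorm_ge0 ?sumr_ge0 // enorm_sqr.
pose P (a b : R) := a <= b ^+ 2 /\ 0 <= b.
suff [] : P (\sum_(i < n) x ord0 i ^+ 2) (\sum_(i < n) `|x ord0 i|) by [].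
apply: (big_rec2 P); first by rewrite /P expr0n.
move=> i a b _ [ab b0]; split; last by rewrite addr_ge0.
rewrite sqrrD real_normK ?num_real // -addrA lerD2l.
by rewrite (le_trans ab) // lerDr mulrn_wge0 // mulr_ge0.
Qed.

End EuclideanNorm.

Section Vanishing.
Context {R : realType}.
Implicit Types u v : nat -> R.

Definition vanishes u : Prop :=
  forall e : R, 0 < e -> exists N, forall m, (N <= m)%N -> `|u m| < e.

Lemma tends0E u : tends0 u <-> vanishes u.
Proof.
have nearE (P : nat -> Prop) :
    (\forall m \near \oo, P m) <-> exists N, forall m, (N <= m)%N -> P m.
  split=> [[N _ NP]|[N NP]]; first by exists N => m /NP.
  by apply: filterS (nbhs_infty_ge N) => m; exact: NP.
split=> [/cvgrPdist_lt u0 e e0|u0].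
  by apply/nearE; apply: filterS (u0 e e0) => m; rewrite sub0r normrN.
apply/cvgrPdist_lt => e e0; apply/nearE; have [N uN] := u0 e e0.
by exists N => m /uN; rewrite sub0r normrN.
Qed.

Lemma vanishes_subseq u (phi : nat -> nat) :
  (forall m, (m <= phi m)%N) -> vanishes u -> vanishes (u \o phi).
Proof.
move=> phiP u0 e e0; have [N uN] := u0 e e0.
by exists N => m mN; apply: uN; exact: leq_trans mN (phiP m).
Qed.

Lemma vanishes_le u v k : vanishes u -> 0 < k ->
  (exists N, forall m, (N <= m)%N -> `|v m| <= k * `|u m|) -> vanishes v.
Proof.
move=> u0 k0 [N1 vu] e e0; have [N2 uN] := u0 (e / k) (divr_gt0 e0 k0).
exists (maxn N1 N2) => m; rewrite geq_max => /andP[/vu vum /uN um].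
by rewrite (le_lt_trans vum) // -ltr_pdivlMl // mulrC.
Qed.

Lemma vanishesD u v : vanishes u -> vanishes v -> vanishes (fun m => u m + v m).
Proof.
move=> u0 v0 e e0; have e20 : 0 < e / 2 by rewrite divr_gt0.
have [N1 uN] := u0 _ e20; have [N2 vN] := v0 _ e20.
exists (maxn N1 N2) => m; rewrite geq_max => /andP[/uN um /vN vm].
by rewrite (le_lt_trans (ler_normD _ _)) // [e](splitr e) ltrD.
Qed.

Lemma vanishes_sum_abs k (g : nat -> 'I_k -> R) :
  (forall i, vanishes (g^~ i)) -> vanishes (fun m => \sum_(i < k) `|g m i|).
Proof.
move=> g0 e e0; have k0 : (0 : R) < k%:R + 1 by rewrite ltr_wpDl.
have /choice [N gN] : forall i, exists N, forall m, (N <= m)%N ->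
    `|g m i| < e / (k%:R + 1) by move=> i; apply: g0; rewrite divr_gt0.
exists (\max_(i < k) N i) => m mN; rewrite ger0_norm ?sumr_ge0 //.
have gmN i : `|g m i| <= e / (k%:R + 1).
  by rewrite ltW // gN // (leq_trans _ mN) // (leq_bigmax i).
rewrite (le_lt_trans (ler_sum _ (fun i _ => gmN i))) // sumr_const card_ord.
by rewrite -[_ *+ k]mulr_natl mulrA ltr_pdivrMr // mulrC ltr_pM2l // ltrDl.
Qed.

Lemma cvgn_vanishes u : cvgn u -> exists l, vanishes (fun m => u m - l).
Proof.
move/cvg_ex => [l /cvgrPdist_lt ul]; exists l => e e0.
by have [N _ uN] := ul e e0; exists N => m /uN /=; rewrite distrC.
Qed.

End Vanishing.

Section Directions.
Context {R : realType} {n : nat}.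
Implicit Types (a c : 'rV[R]_n) (x z : nat -> 'rV[R]_n) (A B : set 'rV[R]_n).

Definition dir (x : 'rV[R]_n) : 'rV[R]_n := (enorm x)^-1 *: x.

Lemma enorm_dir (x : 'rV[R]_n) : x <> 0 -> enorm (dir x) = 1.
Proof.
move=> /enorm_gt0 x0; rewrite /dir enormZ ger0_norm ?invr_ge0 ?ltW //.
by rewrite mulVf // gt_eqF.
Qed.

Lemma enorm_dir_le1 (x : 'rV[R]_n) : enorm (dir x) <= 1.
Proof.
have [->|/eqP/enorm_dir -> //] := eqVneq x 0.
by rewrite /dir scaler0 enorm0.
Qed.

Lemma enorm_dirB (x y : 'rV[R]_n) : x <> 0 ->
  enorm (dir y - dir x) <= 2 * (enorm (y - x) / enorm x).
Proof.
move=> /enorm_gt0 x0; set a := enorm x in x0 *.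
have a_inv_ge0 : 0 <= a^-1 by rewrite invr_ge0 ltW.
have [->|/eqP/enorm_gt0 y0] := eqVneq y 0.
  rewrite /dir scaler0 !sub0r !enormN enormZ -/a ger0_norm //.
  by rewrite mulVf ?gt_eqF // mulfV ?gt_eqF //; lra.
set b := enorm y in y0 *.
have -> : dir y - dir x = a^-1 *: (y - x) + (b^-1 - a^-1) *: y.
  by rewrite /dir -/a -/b scalerBr scalerBl [RHS]addrC [RHS]addrA subrK.
rewrite (le_trans (ler_enormD _ _)) // !enormZ -/b ger0_norm //.
have -> : `|b^-1 - a^-1| * b = `|a - b| / a.
  rewrite -{2}(ger0_norm (ltW y0)) -normrM.
  rewrite (_ : _ * _ = (a - b) / a); last by field; rewrite ?gt_eqF.
  by rewrite normrM (ger0_norm a_inv_ge0).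
have := ler_enorm_dist x y; rewrite enorm_distC -/a -/b => ab.
rewrite mulrC -mulrDl mulrA ler_pM2r ?invr_gt0 //; lra.
Qed.

Lemma subseq_cvg_coords (w : nat -> 'rV[R]_n) M k :
  (forall m, enorm (w m) <= M) ->
  exists phi : nat -> nat, (forall m, (m <= phi m)%N) /\
    forall i : 'I_n, (i < k)%N -> exists l, vanishes (fun m => w (phi m) ord0 i - l).
Proof.
move=> wM; elim: k => [|k [phi [phiP wcvg]]]; first by exists id.
have [kn|nk] := ltnP k n; last first.
  by exists phi; split=> // i ik; apply: wcvg; exact: leq_trans (ltn_ord i) nk.
have : bounded_fun (fun m => w (phi m) ord0 (Ordinal kn)).
  apply: filterS (nbhs_pinfty_ge (num_real M)) => M' MM' m _ /=.
  by rewrite (le_trans (ler_coord_enorm _ _)) // (le_trans (wM _)).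
move=> /bolzano_weierstrass[psi /unstable.mono_leq_infl psiP /cvgn_vanishes[l wl]].
exists (phi \o psi); split=> [m|i]; first exact: leq_trans (psiP m) (phiP _).
rewrite ltnS leq_eqVlt => /orP[/eqP ik|/wcvg[l' wl']].
  by exists l; rewrite (_ : i = Ordinal kn) //; exact: val_inj.
by exists l'; exact: vanishes_subseq psiP wl'.
Qed.

Lemma bolzano_weierstrass_rV (w : nat -> 'rV[R]_n) M :
  (forall m, enorm (w m) <= M) ->
  exists phi c, (forall m, (m <= phi m)%N) /\ vanishes (fun m => enorm (w (phi m) - c)).
Proof.
move=> /(subseq_cvg_coords n)[phi [phiP wcvg]].
have /choice[L wL] : forall i : 'I_n, exists l, vanishes (fun m => w (phi m) ord0 i - l).
  by move=> i; exact: wcvg.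
exists phi, (\row_i L i); split=> // e e0.
have [N wN] := vanishes_sum_abs wL e0.
exists N => m /wN; rewrite !ger0_norm ?enorm_ge0 ?sumr_ge0 //; apply: le_lt_trans.
by rewrite (le_trans (enorm_le_sum_abs _)) // ler_sum // => i _; rewrite !mxE.
Qed.

Lemma enorm_lim_unit (w : nat -> 'rV[R]_n) c :
  (exists N, forall m, (N <= m)%N -> enorm (w m) = 1) ->
  vanishes (fun m => enorm (w m - c)) -> enorm c = 1.
Proof.
move=> [N w1] wc; apply/eqP; apply: contraT => c1.
have [|N' wN] := wc `|1 - enorm c|; first by rewrite normr_gt0 subr_eq0 eq_sym.
have := wN _ (leq_maxr N N'); rewrite ger0_norm ?enorm_ge0 // -(w1 _ (leq_maxl N N')).
by move/(le_lt_trans (ler_enorm_dist _ _)); rewrite ltxx.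
Qed.

(* Only eventually nonzero, so that the notion is stable under asymptotic
   equivalence (to0_along_negl); Dset requires nonzero terms, hence the shift in
   to0_along_Dset. *)
Definition to0_along (x : nat -> 'rV[R]_n) c : Prop :=
  [/\ exists N, forall m, (N <= m)%N -> x m <> 0,
      vanishes (fun m => enorm (x m)) &
      vanishes (fun m => enorm (dir (x m) - c))].

Lemma Dset_to0_along A a :
  Dset A a -> enorm a = 1 /\ exists x, (forall m, A (x m)) /\ to0_along x a.
Proof.
case=> a1 [x [xA [/tends0E x0 /tends0E xa]]]; split=> //; exists x.
by split=> [m|]; [case: (xA m)|split=> //; exists 0%N => m _; case: (xA m)].
Qed.

Lemma to0_along_Dset A a x : enorm a = 1 ->
  (exists N, forall m, (N <= m)%N -> A (x m)) -> to0_along x a -> Dset A a.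
Proof.
move=> a1 [N1 xA] [[N2 xn0] x0 xa]; split=> //; set N := maxn N1 N2.
have shift m : (m <= m + N)%N by exact: leq_addr.
exists (fun m => x (m + N)); split; last first.
  by split; apply/tends0E;
    [exact: vanishes_subseq shift x0|exact: vanishes_subseq shift xa].
move=> m; have : (N1 <= m + N)%N && (N2 <= m + N)%N by rewrite -geq_max leq_addl.
by case/andP => /xA ? /xn0.
Qed.

Lemma to0_along_subseq x c (phi : nat -> nat) :
  (forall m, (m <= phi m)%N) -> to0_along x c -> to0_along (x \o phi) c.
Proof.
move=> phiP [[N xn0] x0 xc]; split; last 2 first.
- exact: vanishes_subseq phiP x0.
- exact: vanishes_subseq phiP xc.
by exists N => m mN; apply: xn0; exact: leq_trans mN (phiP m).
Qed.

Lemma to0_along_subseq_dir x :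
  (exists N, forall m, (N <= m)%N -> x m <> 0) -> vanishes (fun m => enorm (x m)) ->
  exists phi c, enorm c = 1 /\ (forall m, (m <= phi m)%N) /\ to0_along (x \o phi) c.
Proof.
move=> [N xn0] x0.
have [phi [c [phiP xc]]] := bolzano_weierstrass_rV (fun m => enorm_dir_le1 (x m)).
have xphi m : (N <= m)%N -> x (phi m) <> 0.
  by move=> mN; apply: xn0; exact: leq_trans mN (phiP m).
exists phi, c; split; last by split=> //; split; [exists N|exact: vanishes_subseq phiP x0|].
by apply: enorm_lim_unit xc; exists N => m /xphi /enorm_dir.
Qed.

Lemma to0_along_eventually_ball x c e : to0_along x c -> 0 < e ->
  exists N, forall m, (N <= m)%N -> eball0 e (x m).
Proof.
move=> [_ x0 _] /x0[N xN].
by exists N => m /xN; rewrite ger0_norm ?enorm_ge0.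
Qed.

Lemma negl_distC (u v w : nat -> 'rV[R]_n) :
  negl (fun m => u m - v m) w -> negl (fun m => v m - u m) w.
Proof.
by move=> uv e e0; have [N uN] := uv e e0; exists N => m; rewrite enorm_distC; exact: uN.
Qed.

Lemma negl_ratio (u x : nat -> 'rV[R]_n) :
  (exists N, forall m, (N <= m)%N -> x m <> 0) -> negl u x ->
  vanishes (fun m => enorm (u m) / enorm (x m)).
Proof.
move=> [N1 xn0] ux e e0; have [N2 uN] := ux (e / 2) (divr_gt0 e0 (ltr0Sn _ 1)).
exists (maxn N1 N2) => m; rewrite geq_max => /andP[/xn0/enorm_gt0 xm /uN um].
rewrite ger0_norm ?divr_ge0 ?enorm_ge0 // ltr_pdivrMr //.
by rewrite (le_lt_trans um) // ltr_pM2r //; lra.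
Qed.

Lemma to0_along_negl x z c :
  to0_along x c -> negl (fun m => z m - x m) x -> to0_along z c.
Proof.
move=> [[N xn0] x0 xc] zx; split.
- have [N' zN] := zx (1 / 2) (divr_gt0 ltr01 (ltr0Sn _ 1)).
  exists (maxn N N') => m; rewrite geq_max => /andP[/xn0/enorm_gt0 xm /zN zm] zm0.
  by move: zm; rewrite zm0 sub0r enormN; lra.
- apply: (vanishes_le (k := 2) x0) => //; have [N' zN] := zx 1 ltr01.
  exists N' => m /zN; rewrite mul1r !ger0_norm ?enorm_ge0 // => zm.
  by have := ler_enormD (z m - x m) (x m); rewrite subrK; lra.
- have dir_bound : vanishes (fun m =>
      2 * (enorm (z m - x m) / enorm (x m)) + enorm (dir (x m) - c)).
    apply: vanishesD xc.
    apply: (vanishes_le (k := 2) (negl_ratio (ex_intro _ N xn0) zx)) => //.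
    by exists 0%N => m _; rewrite normrM ger0_norm.
  apply: (vanishes_le (k := 1) dir_bound) => //.
  exists N => m /xn0 xm.
  rewrite mul1r !ger0_norm ?addr_ge0 ?mulr_ge0 ?divr_ge0 ?invr_ge0 ?enorm_ge0 //.
  have := ler_enormD (dir (z m) - dir (x m)) (dir (x m) - c); rewrite addrA subrK.
  by move/le_trans; apply; rewrite lerD2r enorm_dirB.
Qed.

Lemma SSP_to0_along A x c : SSP A -> Dset A c -> to0_along x c ->
  exists b, (forall m, A (b m)) /\ negl (fun m => b m - x m) x.
Proof.
move=> SA Ac [_ x0 xc].
have x0' : seq_to0 x by apply/tends0E.
have xc' : dir_to x c by apply/tends0E.
have [b [bA [xb _]]] := SA x x0' (ex_intro _ c (conj Ac xc')).
by exists b; split=> //; exact: negl_distC.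
Qed.

Lemma Dset_sub A B : A `<=` B -> Dset A `<=` Dset B.
Proof.
move=> AB a [a1 [x [xA xa]]]; split=> //; exists x; split=> // m.
by case: (xA m) => /AB.
Qed.

End Directions.

Section GermImage.
Context {R : realType} {n : nat}.
Variables (h : 'rV[R]_n -> 'rV[R]_n) (r : R).

Lemma gimage_sub (A B : set 'rV[R]_n) : A `<=` B -> gimage h r A `<=` gimage h r B.
Proof. by move=> AB _ [x [/AB Bx rx] <-]; exists x. Qed.

Lemma gimage_seq_preimage (A : set 'rV[R]_n) (y : nat -> 'rV[R]_n) :
  (forall m, gimage h r A (y m)) ->
  exists v, (forall m, A (v m) /\ eball0 r (v m)) /\ y = h \o v.
Proof.
move=> hAy; have /choice[v vP] : forall m, exists v, (A v /\ eball0 r v) /\ h v = y m.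
  by move=> m; have [p ? <-] := hAy m; exists p.
by exists v; split=> [m|]; [case: (vP m)|apply/funext => m; case: (vP m) => _ <-].
Qed.

End GermImage.

Section BiLipschitzGerm.
Context {R : realType} {n : nat}.
Variables (h : 'rV[R]_n -> 'rV[R]_n) (r K1 K2 : R).
Hypothesis hh : bilip_homeo_germ h r K1 K2.
Implicit Types (x y : 'rV[R]_n) (u v w : nat -> 'rV[R]_n).

Let K1_gt0 : 0 < K1. Proof. by case: hh => _ []. Qed.

Let K2_gt0 : 0 < K2. Proof. by case: hh => _ [K10 [K12 _]]; exact: lt_le_trans K12. Qed.

Lemma bilip_h0 : h 0 = 0. Proof. by case: hh => _ [_ [_ []]]. Qed.

Lemma bilip_lower x y : eball0 r x -> eball0 r y ->
  K1 * enorm (x - y) <= enorm (h x - h y).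
Proof. by case: hh => _ [_ [_ [_ [hL _]]]] rx ry; case: (hL x y rx ry). Qed.

Lemma bilip_upper x y : eball0 r x -> eball0 r y ->
  enorm (h x - h y) <= K2 * enorm (x - y).
Proof. by case: hh => _ [_ [_ [_ [hL _]]]] rx ry; case: (hL x y rx ry). Qed.

Let eball0_0 : eball0 r (0 : 'rV[R]_n).
Proof. by case: hh => r0 _; rewrite /eball0 /= enorm0. Qed.

Lemma bilip_lower0 x : eball0 r x -> K1 * enorm x <= enorm (h x).
Proof. by move=> rx; have := bilip_lower rx eball0_0; rewrite bilip_h0 !subr0. Qed.

Lemma bilip_upper0 x : eball0 r x -> enorm (h x) <= K2 * enorm x.
Proof. by move=> rx; have := bilip_upper rx eball0_0; rewrite bilip_h0 !subr0. Qed.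

Lemma negl_bilip_pull u v :
  (forall m, eball0 r (u m)) -> (forall m, eball0 r (v m)) ->
  negl (fun m => h (u m) - h (v m)) (h \o v) -> negl (fun m => u m - v m) v.
Proof.
move=> ru rv huv e e0.
have [N hN] := huv (K1 * e / K2) (divr_gt0 (mulr_gt0 K1_gt0 e0) K2_gt0).
exists N => m /hN /= hm; rewrite -(ler_pM2l K1_gt0).
rewrite (le_trans (bilip_lower (ru m) (rv m))) // (le_trans hm) //.
have e'_ge0 : 0 <= K1 * e / K2 by rewrite ltW // divr_gt0 ?mulr_gt0.
rewrite (le_trans (ler_wpM2l e'_ge0 (bilip_upper0 (rv m)))) //.
by rewrite (_ : K1 * e / K2 * _ = K1 * (e * enorm (v m))) //; field; rewrite gt_eqF.
Qed.

Lemma negl_bilip_push w v :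
  (exists N, forall m, (N <= m)%N -> eball0 r (w m)) -> (forall m, eball0 r (v m)) ->
  negl (fun m => w m - v m) v -> negl (fun m => h (w m) - h (v m)) (h \o v).
Proof.
move=> [N1 rw] rv wv e e0.
have [N2 wN] := wv (e * K1 / K2) (divr_gt0 (mulr_gt0 e0 K1_gt0) K2_gt0).
exists (maxn N1 N2) => m; rewrite geq_max => /andP[/rw rwm /wN wm] /=.
rewrite (le_trans (bilip_upper rwm (rv m))) // (le_trans (ler_wpM2l (ltW K2_gt0) wm)) //.
rewrite (_ : K2 * _ = e * (K1 * enorm (v m))); last by field; rewrite gt_eqF.
by rewrite ler_pM2l // bilip_lower0.
Qed.

Lemma to0_along_bilip_lift v a : (forall m, eball0 r (v m)) -> to0_along (h \o v) a ->
  exists phi c, enorm c = 1 /\ (forall m, (m <= phi m)%N) /\ to0_along (v \o phi) c.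
Proof.
move=> rv [[N hvn0] hv0 _]; apply: to0_along_subseq_dir.
  by exists N => m /hvn0 hvm vm0; apply: hvm; rewrite /= vm0 bilip_h0.
apply: (vanishes_le (k := K1^-1) hv0); first by rewrite invr_gt0.
by exists 0%N => m _; rewrite !ger0_norm ?enorm_ge0 // ler_pdivlMl // bilip_lower0.
Qed.

End BiLipschitzGerm.

Theorem theorem2p30 (R : realType) (n : nat) (h : 'rV[R]_n -> 'rV[R]_n)
    (r K1 K2 : R) (U V : set 'rV[R]_n) :
  bilip_homeo_germ h r K1 K2 ->
  in_closure0 U -> in_closure0 V ->
  Dset (U `&` V) = Dset U `&` Dset V ->
  SSP (U `&` V) ->
  SSP (gimage h r U) ->
  Dset (gimage h r (U `&` V)) = Dset (gimage h r U) `&` Dset (gimage h r V).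
Proof.
move=> hh _ _ DUV SUV SU; apply/seteqP; split=> [a Da|a [DhU DhV]].
  by split; apply: Dset_sub Da; apply: gimage_sub => x [].
have [a1 [y [hVy ya]]] := Dset_to0_along DhV.
have [v [vVr yE]] := gimage_seq_preimage hVy; subst y.
have rv m : eball0 r (v m) by case: (vVr m).
have [phi [c [c1 [phiP vc]]]] := to0_along_bilip_lift hh rv ya.
have cV : Dset V c by apply: to0_along_Dset c1 _ vc; exists 0%N => m _; case: (vVr (phi m)).
have [b [hUb bv]] := SSP_to0_along SU DhU (to0_along_subseq phiP ya).
have [u [uUr bE]] := gimage_seq_preimage hUb; subst b.
have cU : Dset U c.
  apply: to0_along_Dset c1 _ (to0_along_negl (z := u) vc _).
    by exists 0%N => m _; case: (uUr m).
  by apply: (negl_bilip_pull (v := v \o phi) hh _ _ bv) => m; [case: (uUr m)|exact: rv].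
have cUV : Dset (U `&` V) c by rewrite DUV.
have [w [UVw wv]] := SSP_to0_along SUV cUV vc.
have [N rw] := to0_along_eventually_ball (to0_along_negl vc wv) (proj1 hh).
have hwa := to0_along_negl (to0_along_subseq phiP ya)
  (negl_bilip_push hh (ex_intro _ N rw) (fun m => rv _) wv).
by apply: to0_along_Dset a1 _ hwa; exists N => m /rw rwm; exists (w m).
Qed.
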